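(* Let $k\ge 0$ be an integer and let $g_{-k}<\dots<g_{-1}<g_0<g_1<\dots<g_k$ be the zeros of the Legendre polynomial $L_{2k+1}$ of degree $2k+1$ on $[-1,1]$, so that $g_{-i}=-g_i$ and $g_0=0$. Let $\hat v$ be a polynomial on $\hat K=[-1,1]^2$ whose restriction to each of the four edges of $\hat K$ is a polynomial (in the edge variable) of degree $\le 2k+1$. Then $$\sum_{i=-k}^{k}\gamma_i\big(\hat v(1,g_i)+\hat v(-1,g_i)\big)=\sum_{i=-k}^{k}\gamma_i\big(\hat v(g_i,1)+\hat v(g_i,-1)\big),$$ where, setting $g_{-(k+1)}:=-1$ and $g_{k+1}:=1$, $$\gamma_i=\prod_{\substack{j=-(k+1)\\ j\neq i}}^{k}\frac{1-g_j}{g_i-g_j}+\prod_{\substack{j=-k\\ j\ne i}}^{k+1}\frac{-1-g_j}{g_i-g_j},\qquad i=-k,\dots,k,$$ and these numbers satisfy $$\gamma_i=\frac{2}{g_i^2}\prod_{\substack{j=1\\ j\neq |i|}}^{k}\frac{1-g_j^2}{g_i^2-g_j^2}\quad (i\neq 0),\qquad \gamma_0=4\prod_{j=1}^{k}\frac{g_j^2-1}{g_j^2}.$$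
   Context: $\hat K=[-1,1]^2$ is the reference square with coordinates $(\hat x,\hat y)$. $L_n$ denotes the Legendre polynomial of degree $n$ on $[-1,1]$. Empty products equal $1$. *)

From HB Require Import structures.
From mathcomp Require Import all_boot all_order all_algebra.
Set Implicit Arguments. Unset Strict Implicit. Unset Printing Implicit Defensive.
Import Order.TTheory GRing.Theory Num.Theory.
Local Open Scope ring_scope.

Section Defs.
Variable R : realFieldType.

(* legendre_pair n = (L_n, L_{n+1}), via Bonnet's recursion
   (n+2) L_{n+2} = (2n+3) X L_{n+1} - (n+1) L_n, with L_0 = 1, L_1 = X. *)
Fixpoint legendre_pair (n : nat) : {poly R} * {poly R} :=
  match n with
  | 0 => (1, 'X)
  | n'.+1 =>
      let: (a, b) := legendre_pair n' in
      (b, (n'.+2)%:R^-1 *: ((n'.*2.+3)%:R *: ('X * b) - (n'.+1)%:R *: a))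
  end.

Definition legendre (n : nat) : {poly R} := (legendre_pair n).1.

(* Bivariate polynomials: v : {poly {poly R}}; the outer variable is y and the
   inner (coefficient) variable is x, so  v(x,y) = (v.[y%:P]).[x]. *)
Definition eval2 (v : {poly {poly R}}) (x y : R) : R := (v.[y%:P]).[x].

Definition restr_x (v : {poly {poly R}}) (c : R) : {poly R} :=
  map_poly (fun q : {poly R} => q.[c]) v.
Definition restr_y (v : {poly {poly R}}) (c : R) : {poly R} := v.[c%:P].

Definition zlen (a b : int) : nat :=
  match (b + 1 - a)%R with Posz n => n | Negz _ => 0%N end.

Definition zsum (a b : int) (F : int -> R) : R :=
  \sum_(t < zlen a b) F (a + t%:Z).
Definition zprod (a b : int) (P : pred int) (F : int -> R) : R :=
  \prod_(t < zlen a b | P (a + t%:Z)) F (a + t%:Z).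

Definition gext (k : nat) (g : int -> R) (j : int) : R :=
  if j == - (k.+1)%:Z then -1 else if j == (k.+1)%:Z then 1 else g j.

Definition gamma (k : nat) (g : int -> R) (i : int) : R :=
  zprod (- (k.+1)%:Z) k%:Z (fun j => j != i)
        (fun j => (1 - gext k g j) / (gext k g i - gext k g j))
+ zprod (- k%:Z) (k.+1)%:Z (fun j => j != i)
        (fun j => (-1 - gext k g j) / (gext k g i - gext k g j)).

End Defs.

From HB Require Import structures.
From mathcomp Require Import all_boot all_order all_algebra.
From mathcomp Require Import ring lra zify.
Import Order.TTheory GRing.Theory Num.Theory.
Local Open Scope ring_scope.

(* Let g_{-k} < ... < g_k be zeros of L_{2k+1}.  Since deg L_{2k+1} <= 2k+1,
   these are all its zeros; as L_{2k+1} is odd and the g_i are increasing,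
   g_{-i} = -g_i and g_0 = 0 (lemma g_opp).

   The two products defining gamma_m are the Lagrange weights of the node g_m
   for interpolation at 1 on the 2k+2 points {-1, g_{-k}, ..., g_k}, and at -1
   on {g_{-k}, ..., g_k, 1}.  For a polynomial p of degree <= 2k+1, Lagrange
   interpolation at 1 and at -1 gives
       p(1)  = w_+ p(-1) + sum_m (first weight of m)  p(g_m),
       p(-1) = w_- p(1)  + sum_m (second weight of m) p(g_m),
   and by the symmetry of the nodes the endpoint weights are w_+ = w_- = -1.
   Adding, sum_m gamma_m p(g_m) = 2 (p(1) + p(-1))  (lemma node_quadrature).
   Applied to the restrictions of v to the two vertical and to the two
   horizontal edges, both sides of the identity equal twice the sum of the
   values of v at the four corners.  The closed forms of gamma_i follow by
   grouping the factors of each product in mirror pairs {j, -j}. *)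

Definition zrange (a b : int) : seq int := [seq a + t%:Z | t <- iota 0 (zlen a b)].

Lemma zlenE (a b : int) : a <= b + 1 -> (zlen a b)%:Z = b + 1 - a.
Proof. by rewrite /zlen; case E: (b + 1 - a) => [n|n] //; lia. Qed.

Lemma zlen0 (a b : int) : b + 1 <= a -> zlen a b = 0%N.
Proof. by rewrite /zlen; case E: (b + 1 - a) => [n|n] //; lia. Qed.

Lemma zsumE (R : realFieldType) (a b : int) (F : int -> R) :
  zsum a b F = \sum_(j <- zrange a b) F j.
Proof. by rewrite /zsum big_map -val_enum_ord big_map /index_enum -enumT. Qed.

Lemma zprodE (R : realFieldType) (a b : int) (P : pred int) (F : int -> R) :
  zprod a b P F = \prod_(j <- zrange a b | P j) F j.
Proof. by rewrite /zprod big_map -val_enum_ord big_map /index_enum -enumT. Qed.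

Lemma mem_zrange (a b j : int) : (j \in zrange a b) = (a <= j <= b).
Proof.
apply/mapP/idP => [[t]|hj]; rewrite ?mem_iota ?add0n.
  case: (leP a (b + 1)) => [hab|/ltW hba]; last by rewrite zlen0.
  by have := zlenE _ _ hab; lia.
exists `|j - a|%N; last by lia.
have hab : a <= b + 1 by lia.
by rewrite mem_iota add0n; have := zlenE _ _ hab; lia.
Qed.

Lemma zrange_sorted (a b : int) : sorted <%R (zrange a b).
Proof.
apply: (homo_sorted (e := ltn)) (iota_ltn_sorted _ _) => m n.
by rewrite ltrD2l ltz_nat.
Qed.

Lemma zrange_uniq (a b : int) : uniq (zrange a b).
Proof. exact/lt_sorted_uniq/zrange_sorted. Qed.

Lemma size_zrange (a b : int) : a <= b + 1 -> (size (zrange a b))%:Z = b + 1 - a.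
Proof. by move=> hab; rewrite size_map size_iota zlenE. Qed.

Lemma zrange_cons (a b : int) : a <= b -> zrange a b = a :: zrange (a + 1) b.
Proof.
move=> hab; apply: lt_sorted_eq; first exact: zrange_sorted.
  rewrite /= path_sortedE; last exact: lt_trans.
  rewrite zrange_sorted andbT; apply/allP => j; rewrite mem_zrange; lia.
by move=> j; rewrite in_cons !mem_zrange; lia.
Qed.

Lemma zrange_perm_last (a b : int) : a <= b + 1 ->
  perm_eq (zrange a (b + 1)) ((b + 1) :: zrange a b).
Proof.
move=> hab; apply: uniq_perm; rewrite /= ?zrange_uniq ?mem_zrange ?andbT //; first lia.
by move=> j; rewrite in_cons !mem_zrange; lia.
Qed.

Section LegendreFacts.
Variable R : realFieldType.

Lemma legendre_pair_at1 (n : nat) :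
  (legendre_pair R n).1.[1] = 1 /\ (legendre_pair R n).2.[1] = 1.
Proof.
elim: n => [|n [IH1 IH2]] /=; first by rewrite hornerC hornerX.
case: (legendre_pair R n) IH1 IH2 => a b /= IH1 IH2; split => //.
rewrite !(hornerZ, hornerD, hornerN, hornerM, hornerX) IH1 IH2 !mulr1.
have -> : (n.*2.+3)%:R - (n.+1)%:R = (n.+2)%:R :> R.
  by apply/eqP; rewrite subr_eq -natrD; apply/eqP; congr (_%:R); lia.
by rewrite mulVf // pnatr_eq0.
Qed.

Lemma legendre_pair_opp (n : nat) (x : R) :
  (legendre_pair R n).1.[- x] = (-1) ^+ n * (legendre_pair R n).1.[x] /\
  (legendre_pair R n).2.[- x] = (-1) ^+ n.+1 * (legendre_pair R n).2.[x].
Proof.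
elim: n => [|n [IH1 IH2]] /=.
  by rewrite !hornerC !hornerX expr1 mulN1r expr0 mul1r.
case: (legendre_pair R n) IH1 IH2 => a b /= IH1 IH2; split => //.
by rewrite !(hornerZ, hornerD, hornerN, hornerM, hornerX) IH1 IH2 !exprS; ring.
Qed.

Lemma size_legendre_pair (n : nat) :
  (size (legendre_pair R n).1 <= n.+1)%N /\ (size (legendre_pair R n).2 <= n.+2)%N.
Proof.
elim: n => [|n [IH1 IH2]] /=; first by rewrite size_polyC size_polyX leq_b1.
case: (legendre_pair R n) IH1 IH2 => a b /= IH1 IH2; split => //.
apply: leq_trans (size_scale_leq _ _) _.
apply: leq_trans (size_polyD _ _) _; rewrite geq_max size_polyN.
apply/andP; split; apply: leq_trans (size_scale_leq _ _) _; last by apply: (leq_trans IH1); lia.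
by apply: leq_trans (size_polyMleq _ _) _; rewrite size_polyX /=; lia.
Qed.

Lemma legendre_at1 (n : nat) : (legendre R n).[1] = 1.
Proof. exact: (legendre_pair_at1 n).1. Qed.

Lemma legendre_opp (n : nat) (x : R) :
  (legendre R n).[- x] = (-1) ^+ n * (legendre R n).[x].
Proof. exact: (legendre_pair_opp n x).1. Qed.

Lemma size_legendre (n : nat) : (size (legendre R n) <= n.+1)%N.
Proof. exact: (size_legendre_pair n).1. Qed.

Lemma legendre_neq0 (n : nat) : legendre R n != 0.
Proof. by apply: contra_eq_neq (legendre_at1 n) => ->; rewrite horner0 eq_sym oner_neq0. Qed.

End LegendreFacts.

Section Interpolation.
Variable F : fieldType.

Lemma size_prod_affine (I : Type) (s : seq I) (P : pred I) (f : I -> {poly F}) :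
  (forall i, (size (f i) <= 2)%N) ->
  (size (\prod_(i <- s | P i) f i)%R <= (count P s).+1)%N.
Proof.
move=> sf; elim: s => [|i s IH]; first by rewrite big_nil size_poly1.
rewrite big_cons /=; case: (P i) => //=.
apply: leq_trans (size_polyMleq _ _) _; move: IH (sf i).
set a := size (f i); set b := size _; lia.
Qed.

Lemma lagrange_interpolation (I : eqType) (J : seq I) (x : I -> F) (p : {poly F}) (t : F) :
  uniq J -> {in J &, injective x} -> (size p <= size J)%N ->
  p.[t] = \sum_(m <- J) p.[x m] * \prod_(l <- J | l != m) ((t - x l) / (x m - x l)).
Proof.
move=> uJ xinj sp.
pose ell m := \prod_(l <- J | l != m) (('X - (x l)%:P) * ((x m - x l)^-1)%:P).
have ellE m u : (ell m).[u] = \prod_(l <- J | l != m) ((u - x l) / (x m - x l)).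
  by rewrite horner_prod; apply: eq_bigr => l _; rewrite hornerM hornerXsubC hornerC.
have ell_node m n : m \in J -> n \in J -> (ell m).[x n] = (m == n)%:R.
  move=> mJ nJ; rewrite ellE; have [<-|mn] := eqVneq m n.
    rewrite big1_seq // => l /andP[lm lJ]; rewrite divff // subr_eq0.
    by apply: contra lm => /eqP/xinj ->.
  apply/eqP; rewrite prodf_seq_eq0; apply/hasP; exists n => //.
  by rewrite eq_sym mn subrr mul0r eqxx.
have ell_size m : m \in J -> (size (ell m) <= size J)%N.
  have affine l : (size (('X - (x l)%:P) * ((x m - x l)^-1)%:P)%R <= 2)%N.
    by apply: leq_trans (size_polyMleq _ _) _; rewrite size_XsubC size_polyC; case: (_ != 0).
  move=> mJ; apply: leq_trans (size_prod_affine _ _ _ _ affine) _.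
  by rewrite -(count_predC (pred1 m) J) -add1n leq_add2r -has_count has_pred1.
pose q := p - \sum_(m <- J) p.[x m] *: ell m.
have size_q : (size q <= size (map x J))%N.
  rewrite size_map; apply: leq_trans (size_polyD _ _) _; rewrite geq_max sp size_polyN.
  apply: leq_trans (size_sum _ _ _) _; apply/bigmax_leqP_seq => m mJ _.
  exact: leq_trans (size_scale_leq _ _) (ell_size m mJ).
have q_roots : all (root q) (map x J).
  apply/allP => _ /mapP[n nJ ->]; rewrite rootE hornerD hornerN horner_sum.
  under eq_big_seq => m mJ do rewrite hornerZ ell_node //.
  rewrite (bigD1_seq n) //= eqxx mulr1 big1 ?addr0 ?subrr // => m /negPf.
  by rewrite eq_sym => ->; rewrite mulr0.
have uniq_nodes : uniq (map x J) by rewrite map_inj_in_uniq.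
have q0 : q = 0 := roots_geq_poly_eq0 q_roots uniq_nodes size_q.
move/eqP: q0; rewrite subr_eq0 => /eqP {1}->; rewrite horner_sum.
by apply: eq_bigr => m _; rewrite hornerZ ellE.
Qed.
End Interpolation.

Lemma sorted_oppr_closed (R : realDomainType) (s : seq R) :
  sorted <%R s -> {in s, forall x, - x \in s} -> map -%R (rev s) = s.
Proof.
move=> ss sN; apply: lt_sorted_eq => //.
  rewrite sorted_map rev_sorted; apply: sub_sorted ss => x y /=.
  by rewrite ltrN2.
move=> x; rewrite -{1}(opprK x) mem_map ?mem_rev; last exact: oppr_inj.
by apply/idP/idP => [/sN|/sN]; rewrite ?opprK.
Qed.

Lemma root_mem (R : idomainType) (p : {poly R}) (s : seq R) (y : R) :
  p != 0 -> (size p <= (size s).+1)%N -> uniq s -> all (root p) s -> root p y ->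
  y \in s.
Proof.
move=> p0 sp us rs ry; apply: contraT => ys.
have rys : all (root p) (y :: s) by rewrite /= ry.
have uys : uniq (y :: s) by rewrite /= ys.
by have := max_poly_roots p0 rys uys; rewrite ltnNge sp.
Qed.

Lemma mirror_ratio (F : fieldType) (c x a : F) :
  (c - a) / (x - a) * ((c - - a) / (x - - a)) = (c ^+ 2 - a ^+ 2) / (x ^+ 2 - a ^+ 2).
Proof. by rewrite mulf_div; congr (_ / _); ring. Qed.

Lemma eval2_restr_x (R : realFieldType) (v : {poly {poly R}}) (c y : R) :
  eval2 v c y = (restr_x v c).[y].
Proof.
have yc : horner_eval c y%:P = y := hornerC y c.
symmetry; apply: etrans _ (horner_map (horner_eval c) v y%:P).
by congr (horner _ _); exact: esym yc.
Qed.

Section SymmetricNodes.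
Variables (R : realFieldType) (k : nat) (g : int -> R).
Hypothesis g_root : forall i : int, - k%:Z <= i <= k%:Z ->
  root (legendre R (k.*2.+1)) (g i).
Hypothesis g_incr : forall i j : int, - k%:Z <= i -> i < j -> j <= k%:Z -> g i < g j.

Local Notation L := (legendre R (k.*2.+1)).
Local Notation Jk := (zrange (- k%:Z) k%:Z).
Local Notation Jpos := (zrange 1 k%:Z).

Lemma size_Jk : size Jk = k.*2.+1.
Proof.
have hk : - k%:Z <= k%:Z + 1 by lia.
by have := size_zrange _ _ hk; rewrite -addnn; lia.
Qed.

Lemma rev_Jk : rev Jk = map -%R Jk.
Proof.
have JkN : {in Jk, forall i, - i \in Jk} by move=> i; rewrite !mem_zrange; lia.
by rewrite -{2}(sorted_oppr_closed _ _ (zrange_sorted _ _) JkN) mapK //; apply: opprK.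
Qed.

Lemma nodes_sorted : sorted <%R (map g Jk).
Proof.
apply: (homo_sorted_in (P := [in Jk])); last exact: zrange_sorted.
  by move=> i j; rewrite /= !mem_zrange => hi hj hij; apply: g_incr; lia.
by apply/allP.
Qed.

(* The nodes are all the roots of L_{2k+1}, and L_{2k+1} is odd: hence the set
   of nodes is symmetric, and since the nodes are increasing, g_{-i} = - g_i. *)
Lemma g_opp (i : int) : i \in Jk -> g (- i) = - g i.
Proof.
have nodesN : {in map g Jk, forall y, - y \in map g Jk}.
  move=> _ /mapP[j jJ ->]; apply: (root_mem _ _ _ _ (legendre_neq0 R k.*2.+1)).
  - by rewrite size_map size_Jk size_legendre.
  - exact: lt_sorted_uniq nodes_sorted.
  - by apply/allP => _ /mapP[l lJ ->]; apply: g_root; rewrite -mem_zrange.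
  - have /rootP gj0 : root L (g j) by apply: g_root; rewrite -mem_zrange.
    by rewrite rootE legendre_opp gj0 mulr0.
have := sorted_oppr_closed _ _ nodes_sorted nodesN.
(* generalize the index list, so that map_comp does not unfold zrange *)
rewrite -map_rev rev_Jk => + iJ; move: Jk iJ => s iS.
by rewrite -!map_comp => /eq_in_map/(_ i iS) /= <-; rewrite opprK.
Qed.

Lemma g0 : g 0 = 0.
Proof.
have := @g_opp 0; rewrite oppr0 mem_zrange => gN.
have : g 0 = - g 0 by apply: gN; lia.
lra.
Qed.

Lemma g_inj : {in Jk &, injective g}.
Proof.
move=> i j; rewrite !mem_zrange => iJ jJ gij.
by case: (ltgtP i j) => [lt|lt|//]; [have := g_incr i j | have := g_incr j i];
  rewrite ?gij ?ltxx //; lia.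
Qed.

(* L_{2k+1}(1) = 1 and L_{2k+1}(-1) = -1, so no node is an endpoint of [-1,1];
   and only the middle node is 0. *)
Lemma node_neq1 (i : int) : i \in Jk -> g i != 1.
Proof.
rewrite mem_zrange => /g_root /rootP; apply: contra_eq_neq => ->.
by rewrite legendre_at1 oner_neq0.
Qed.

Lemma node_neqN1 (i : int) : i \in Jk -> g i != -1.
Proof.
rewrite mem_zrange => /g_root /rootP; apply: contra_eq_neq => ->.
by rewrite legendre_opp legendre_at1 mulr1 signr_eq0.
Qed.

Lemma node_neq0 (i : int) : i \in Jk -> i != 0 -> g i != 0.
Proof.
move=> iJ; apply: contra_neq => gi0.
by apply: g_inj; rewrite ?gi0 ?g0 // mem_zrange; lia.
Qed.

Lemma perm_Jk : perm_eq Jk (0 :: Jpos ++ map -%R Jpos).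
Proof.
have memN (s : seq int) j : (j \in map -%R s) = (- j \in s).
  by rewrite -{1}(opprK j) (mem_map oppr_inj).
apply: uniq_perm; first exact: zrange_uniq.
  rewrite /= cat_uniq (map_inj_uniq oppr_inj) zrange_uniq mem_cat memN !mem_zrange /=.
  by rewrite andbT; apply/hasPn => _ /mapP[j jpos ->]; move: jpos; rewrite !mem_zrange; lia.
by move=> j; rewrite mem_zrange in_cons mem_cat memN !mem_zrange; lia.
Qed.

Lemma prod_pairs (F : int -> R) :
  \prod_(l <- Jk) F l = F 0 * \prod_(j <- Jpos) (F j * F (- j)).
Proof. by rewrite (perm_big _ perm_Jk) big_cons big_cat (big_map -%R) big_split. Qed.

(* Leaving out the node i: its mirror -i loses its partner. *)
Lemma prod_pairs_but (F : int -> R) (i : int) : i \in Jk ->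
  \prod_(l <- Jk | l != i) F l =
  (if i == 0 then 1 else F 0 * F (- i)) * \prod_(j <- Jpos | j != `|i|) (F j * F (- j)).
Proof.
rewrite mem_zrange => iJ; rewrite big_mkcond prod_pairs.
have [->|i0] := eqVneq i 0.
  rewrite /= !mul1r normr0 big_seq [RHS]big_seq_cond.
  apply: eq_big => [j|j jpos]; first by case: (boolP (j \in Jpos)); rewrite //= mem_zrange; lia.
  by move: jpos; rewrite mem_zrange => jpos; rewrite !ifT //; lia.
have ipos : `|i| \in Jpos by rewrite mem_zrange; lia.
rewrite /= -mulrA (bigD1_seq _ ipos (zrange_uniq _ _)) /=; congr (_ * (_ * _)).
  have [i_gt0|i_lt0] : 0 < i \/ i < 0 by lia.
  - by rewrite gtr0_norm // eqxx mul1r ifT //; lia.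
  - by rewrite ltr0_norm // opprK eqxx mulr1 ifT //; lia.
rewrite big_seq_cond [RHS]big_seq_cond; apply: eq_bigr => j /andP[].
by rewrite mem_zrange => jpos ji; rewrite !ifT //; lia.
Qed.

Lemma gext_nodes (j : int) : j \in Jk -> gext k g j = g j.
Proof. by rewrite mem_zrange /gext => jJ; do 2 (case: eqP => [?|_]; first lia). Qed.

Lemma gext_lower : gext k g (- (k.+1)%:Z) = -1.
Proof. by rewrite /gext eqxx. Qed.

Lemma gext_upper : gext k g (k.+1)%:Z = 1.
Proof. by rewrite /gext; case: eqP => [?|_]; [lia | rewrite eqxx]. Qed.

Lemma lower_nodes : zrange (- (k.+1)%:Z) k%:Z = - (k.+1)%:Z :: Jk.
Proof.
rewrite zrange_cons; last lia.
by have -> : - (k.+1)%:Z + 1 = - k%:Z by lia.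
Qed.

Lemma upper_nodes : perm_eq (zrange (- k%:Z) (k.+1)%:Z) ((k.+1)%:Z :: Jk).
Proof.
have -> : (k.+1)%:Z = k%:Z + 1 by lia.
by apply: zrange_perm_last; lia.
Qed.

Lemma prod_gext (P : pred int) (H : R -> R) :
  \prod_(l <- Jk | P l) H (gext k g l) = \prod_(l <- Jk | P l) H (g l).
Proof.
by rewrite big_seq_cond [RHS]big_seq_cond; apply: eq_bigr => l /andP[lJ _]; rewrite gext_nodes.
Qed.

(* gamma_m is the sum of the weights at 1 and at -1 of the node g_m for
   Lagrange interpolation on {-1} + nodes and on nodes + {1}. *)
Lemma gamma_nodes (m : int) : m \in Jk ->
  gamma k g m =
    (1 - -1) / (g m - -1) * \prod_(l <- Jk | l != m) ((1 - g l) / (g m - g l))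
  + (-1 - 1) / (g m - 1) * \prod_(l <- Jk | l != m) ((-1 - g l) / (g m - g l)).
Proof.
move=> mJ; have mk : - k%:Z <= m <= k%:Z by rewrite -mem_zrange.
rewrite /gamma !zprodE lower_nodes (perm_big _ upper_nodes) !big_cons !ifT; try lia.
rewrite gext_lower gext_upper gext_nodes //.
by rewrite (prod_gext _ (fun y => (1 - y) / (g m - y))) (prod_gext _ (fun y => (-1 - y) / (g m - y))).
Qed.

Lemma Jpos_nodes (j : int) : j \in Jpos -> (j \in Jk) && (- j \in Jk).
Proof. by rewrite !mem_zrange; lia. Qed.

Lemma node_sqr_neq1 (i : int) : i \in Jk -> g i ^+ 2 != 1.
Proof. by move=> iJ; rewrite sqrf_eq1 negb_or node_neq1 // node_neqN1. Qed.

(* The weight of the endpoint -c in the interpolation at c, c = 1 or -1. *)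
Lemma endpoint_weight (c : R) : c ^+ 2 = 1 ->
  \prod_(l <- Jk) ((c - g l) / (- c - g l)) = -1.
Proof.
move=> c2; have c0 : c != 0 by rewrite -sqrf_eq0 c2 oner_neq0.
rewrite prod_pairs g0 !subr0 invrN mulrN divff // big_seq big1 ?mulr1 // => j.
case/Jpos_nodes/andP => jJ NjJ; rewrite g_opp // mirror_ratio sqrrN divff //.
by rewrite c2 subr_eq0 eq_sym node_sqr_neq1.
Qed.

(* Closed form of gamma_i, i <> 0: pair the factors of j and -j. *)
Lemma gamma_closed_form (i : int) : i \in Jk -> i != 0 ->
  gamma k g i = 2 / (g i) ^+ 2 *
    zprod 1 k%:Z (fun j => j != `|i|)
      (fun j => (1 - (g j) ^+ 2) / ((g i) ^+ 2 - (g j) ^+ 2)).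
Proof.
move=> iJ i0; rewrite gamma_nodes // !prod_pairs_but // (negPf i0) zprodE g0 g_opp //.
set P := \prod_(j <- Jpos | j != `|i|) ((1 - g j ^+ 2) / (g i ^+ 2 - g j ^+ 2)).
have pairs (c : R) : c ^+ 2 = 1 ->
    \prod_(j <- Jpos | j != `|i|) ((c - g j) / (g i - g j) * ((c - g (- j)) / (g i - g (- j)))) = P.
  move=> c2; rewrite big_seq_cond [RHS]big_seq_cond; apply: eq_bigr => j /andP[].
  by case/Jpos_nodes/andP => jJ _ _; rewrite g_opp // mirror_ratio c2.
rewrite !pairs ?expr1n ?sqrrN ?expr1n //.
have gi0 := node_neq0 _ iJ i0.
have gi1 : g i - 1 != 0 by rewrite subr_eq0 node_neq1.
have giN1 : g i + 1 != 0 by rewrite addr_eq0 node_neqN1.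
have gi2 : g i - - g i != 0 by rewrite opprK -mulr2n mulrn_eq0 negb_or gi0.
by field; rewrite gi0 gi1 giN1 gi2.
Qed.

Lemma gamma0_closed_form :
  gamma k g 0 = 4 * zprod 1 k%:Z predT (fun j => ((g j) ^+ 2 - 1) / (g j) ^+ 2).
Proof.
have J0 : (0 : int) \in Jk by rewrite mem_zrange; lia.
rewrite gamma_nodes // !prod_pairs_but // eqxx !mul1r normr0 zprodE g0.
set Q := \prod_(j <- Jpos | predT j) ((g j ^+ 2 - 1) / g j ^+ 2).
have pairs (c : R) : c ^+ 2 = 1 ->
    \prod_(j <- Jpos | j != 0) ((c - g j) / (0 - g j) * ((c - g (- j)) / (0 - g (- j)))) = Q.
  move=> c2; rewrite big_seq_cond [RHS]big_seq_cond; apply: eq_big => [j|j /andP[]].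
    by case: (boolP (j \in Jpos)); rewrite //= mem_zrange; lia.
  case/Jpos_nodes/andP => jJ _ _; rewrite g_opp // mirror_ratio c2 expr0n /= sub0r.
  by rewrite invrN mulrN -mulNr opprB.
rewrite !pairs ?expr1n ?sqrrN ?expr1n //.
by field.
Qed.

Lemma interpolation_at_endpoint (e : int) (c : R) (p : {poly R}) :
  e \notin Jk -> c ^+ 2 = 1 -> gext k g e = - c -> (size p <= k.*2.+2)%N ->
  p.[c] = - p.[- c] + \sum_(m <- Jk) p.[g m] *
    \prod_(l <- e :: Jk | l != m) ((c - gext k g l) / (gext k g m - gext k g l)).
Proof.
move=> eJ c2 ge sp.
have uniq_eJ : uniq (e :: Jk) by rewrite /= eJ zrange_uniq.
have inj_eJ : {in e :: Jk &, injective (gext k g)}.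
  have endpoint_new j : j \in Jk -> gext k g e != gext k g j.
    move=> jJ; rewrite ge gext_nodes //; apply/eqP => gj.
    by have := node_sqr_neq1 _ jJ; rewrite -gj sqrrN c2 eqxx.
  move=> a b; rewrite !in_cons => /predU1P[->|aJ] /predU1P[->|bJ] // gab.
  - by move: (endpoint_new _ bJ); rewrite gab eqxx.
  - by move: (endpoint_new _ aJ); rewrite gab eqxx.
  - by apply: g_inj; rewrite // -!gext_nodes.
have size_eJ : (size p <= size (e :: Jk))%N by rewrite /= size_Jk.
rewrite (lagrange_interpolation _ _ _ _ _ c uniq_eJ inj_eJ size_eJ) big_cons ge.
congr (_ + _); last by apply: eq_big_seq => m mJ; rewrite gext_nodes.
rewrite big_cons eqxx /= -[RHS]mulrN1 -(endpoint_weight _ c2); congr (_ * _).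
rewrite big_seq_cond [RHS]big_seq; apply: eq_big => [l|l /andP[lJ _]]; last by rewrite gext_nodes.
by case: (boolP (l \in Jk)) => //= lJ; apply: contraNneq eJ => <-.
Qed.

Lemma lower_notin : - (k.+1)%:Z \notin Jk.
Proof. by rewrite mem_zrange; lia. Qed.

Lemma upper_notin : (k.+1)%:Z \notin Jk.
Proof. by rewrite mem_zrange; lia. Qed.

Lemma node_quadrature (p : {poly R}) : (size p <= k.*2.+2)%N ->
  zsum (- k%:Z) k%:Z (fun i => gamma k g i * p.[g i]) = 2 * (p.[1] + p.[-1]).
Proof.
move=> sp.
have at1 := interpolation_at_endpoint _ _ _ lower_notin (expr1n _ _) gext_lower sp.
have sqrN1 : (-1 : R) ^+ 2 = 1 by rewrite sqrrN expr1n.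
have gext_upperN : gext k g (k.+1)%:Z = - -1 by rewrite opprK gext_upper.
have atN1 := interpolation_at_endpoint _ _ _ upper_notin sqrN1 gext_upperN sp.
rewrite opprK in atN1.
rewrite zsumE; under eq_bigr do
  rewrite mulrC /gamma !zprodE lower_nodes (perm_big _ upper_nodes) mulrDr.
by rewrite big_split /=; lra.
Qed.

End SymmetricNodes.

Theorem mainTheorem1 (R : realFieldType) (k : nat) (g : int -> R)
  (hroot : forall i : int, - k%:Z <= i <= k%:Z ->
     root (legendre R (k.*2.+1)) (g i))
  (hmono : forall i j : int, - k%:Z <= i -> i < j -> j <= k%:Z -> g i < g j)
  (v : {poly {poly R}})
  (hx1 : (size (restr_x v 1) <= k.*2.+2)%N)
  (hxm1 : (size (restr_x v (-1)) <= k.*2.+2)%N)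
  (hy1 : (size (restr_y v 1) <= k.*2.+2)%N)
  (hym1 : (size (restr_y v (-1)) <= k.*2.+2)%N) :
  zsum (- k%:Z) k%:Z
    (fun i => gamma k g i * (eval2 v 1 (g i) + eval2 v (-1) (g i)))
  = zsum (- k%:Z) k%:Z
    (fun i => gamma k g i * (eval2 v (g i) 1 + eval2 v (g i) (-1)))
  /\ (forall i : int, - k%:Z <= i <= k%:Z -> i != 0 ->
       gamma k g i = 2 / (g i) ^+ 2 *
         zprod 1 k%:Z (fun j => j != `|i|)
           (fun j => (1 - (g j) ^+ 2) / ((g i) ^+ 2 - (g j) ^+ 2)))
  /\ gamma k g 0 = 4 * zprod 1 k%:Z predT
           (fun j => ((g j) ^+ 2 - 1) / (g j) ^+ 2).
Proof.
have size_sum (p q : {poly R}) : (size p <= k.*2.+2)%N -> (size q <= k.*2.+2)%N ->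
    (size (p + q)%R <= k.*2.+2)%N.
  by move=> sp sq; apply: leq_trans (size_polyD _ _) _; rewrite geq_max sp.
split; last split.
- have vertical := node_quadrature _ _ _ hroot hmono _ (size_sum _ _ hx1 hxm1).
  have horizontal := node_quadrature _ _ _ hroot hmono _ (size_sum _ _ hy1 hym1).
  rewrite !zsumE in vertical horizontal *.
  under eq_bigr do rewrite !eval2_restr_x -hornerD.
  under [RHS]eq_bigr do rewrite -hornerD.
  rewrite vertical horizontal !hornerD -!eval2_restr_x /restr_y /eval2; ring.
- by move=> i; rewrite -mem_zrange; apply: gamma_closed_form.
- exact: gamma0_closed_form.
Qed.
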